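(* Let $\langle E,\rightarrow\rangle$ be a computation and $b$ a predicate. The slice of $\langle E,\rightarrow\rangle$ with respect to $b$ is lean if and only if $b$ is regular (with respect to $\langle E,\rightarrow\rangle$).
   Context: A directed graph's consistent cuts are the vertex subsets $C$ such that for every edge $(u,v)$, $v\in C$ implies $u\in C$. A computation is a directed graph $\langle E, \rightarrow\rangle$ whose vertices (events) are partitioned among processes $p_1,\dots,p_n$, the events of each process totally ordered, each process $p_i$ having an initial event $\bot_i$ (first) and a final event $\top_i$ (last), whose path relation contains Lamport's happened-before relation, and in which all initial events lie in one strongly connected component and all final events lie in one strongly connected component. $\emptyset$ and $E$ are the trivial consistent cuts; a predicate is a boolean function of process variables evaluated on non-trivial consistent cuts (using variable values after all events of the cut are executed). A predicate $b$ is regular if whenever consistent cuts $C_1,C_2$ satisfy $b$, so do $C_1\cap C_2$ and $C_1\cup C_2$. The slice of $\langle E,\rightarrow\rangle$ with respect to $b$ is a directed graph with vertex set $E$ whose set of consistent cuts contains every consistent cut of $\langle E,\rightarrow\rangle$ satisfying $b$ and which has the least number of consistent cuts among all such directed graphs (it is determined up to having the same set of consistent cuts). The slice is lean if every non-trivial consistent cut of the slice satisfies $b$. *)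

From Stdlib Require Import Relations.
From mathcomp Require Import all_boot.
Set Implicit Arguments. Unset Strict Implicit. Unset Printing Implicit Defensive.

Definition consistent (E : finType) (g : rel E) (C : {set E}) : bool :=
  [forall u, forall v, g u v ==> (v \in C) ==> (u \in C)].

Definition cuts (E : finType) (g : rel E) : {set {set E}} :=
  [set C | consistent g C].

Definition happened_before (E : finType) (po msg : rel E) : E -> E -> Prop :=
  clos_trans E (fun e f => po e f \/ msg e f).

(* <E, g> is a computation with n processes:
   proc e = process of event e, po = (strict) process order,
   msg = message (send -> receive) relation,
   bot i / top i = initial / final event of process p_i. *)
Definition is_computation (E : finType) (g : rel E) (n : nat)
    (proc : E -> 'I_n) (po msg : rel E) (bot top : 'I_n -> E) : Prop :=
  (forall e f, po e f -> proc e = proc f) /\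
      (forall e, ~~ po e e) /\
      (forall e f h, po e f -> po f h -> po e h) /\
      (forall e f, proc e = proc f -> e <> f -> po e f \/ po f e) /\
      (forall i, proc (bot i) = i /\ proc (top i) = i /\ bot i <> top i) /\
      (forall i e, proc e = i -> e <> bot i -> po (bot i) e) /\
      (forall i e, proc e = i -> e <> top i -> po e (top i)) /\
      (forall e f, happened_before po msg e f -> connect g e f) /\
      (forall i j, connect g (bot i) (bot j)) /\
      (forall i j, connect g (top i) (top j)).

(* A predicate b (a boolean function of the global state at a cut) is
   modelled as an arbitrary boolean function of cuts; it is only evaluated on
   non-trivial consistent cuts of the computation g. *)
Definition satisfies (E : finType) (g : rel E) (b : {set E} -> bool)
    (C : {set E}) : bool :=
  [&& consistent g C, C != set0, C != setT & b C].

Definition regular (E : finType) (g : rel E) (b : {set E} -> bool) : Prop :=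
  forall C1 C2, satisfies g b C1 -> satisfies g b C2 ->
    satisfies g b (C1 :&: C2) /\ satisfies g b (C1 :|: C2).

Definition is_slice (E : finType) (g : rel E) (b : {set E} -> bool)
    (S : rel E) : Prop :=
  (forall C, satisfies g b C -> consistent S C) /\
  (forall S' : rel E, (forall C, satisfies g b C -> consistent S' C) ->
     #|cuts S| <= #|cuts S'|).

Definition lean (E : finType) (g : rel E) (b : {set E} -> bool)
    (S : rel E) : Prop :=
  forall C, consistent S C -> C != set0 -> C != setT -> satisfies g b C.

From mathcomp Require Import all_boot.
From Stdlib Require Import Relations.

Set Implicit Arguments. Unset Strict Implicit. Unset Printing Implicit Defensive.

(* In a computation every non-empty consistent cut contains all initial events
   and every consistent cut other than E misses all final events; so the
   intersection and union of two non-trivial consistent cuts are again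
   non-trivial, and leanness of the slice gives regularity of b.
   Conversely, if b is regular, the cuts satisfying b together with the empty
   set and E form a family closed under intersection and union.  Any such
   family F is exactly the set of consistent cuts of the graph with an edge
   u -> v whenever every member of F containing v contains u (each cut of
   that graph is the union of the least members of F containing its
   elements).  Minimality of the slice then forces the cuts of the slice to be
   exactly this family, i.e. the slice is lean. *)

Section Cuts.

Variables (E : finType) (g : rel E).

Lemma consistentP (C : {set E}) :
  reflect (forall u v, g u v -> v \in C -> u \in C) (consistent g C).
Proof.
apply: (iffP forallP) => [H u v guv vC | H u].
  by have /forallP/(_ v)/implyP/(_ guv)/implyP/(_ vC) := H u.
by apply/forallP => v; apply/implyP => guv; apply/implyP; apply: H.
Qed.

Lemma consistent0 : consistent g set0.
Proof. by apply/consistentP => u v _; rewrite inE. Qed.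

Lemma consistentT : consistent g setT.
Proof. by apply/consistentP => u v _; rewrite !inE. Qed.

Lemma consistentI (A B : {set E}) :
  consistent g A -> consistent g B -> consistent g (A :&: B).
Proof.
move=> /consistentP hA /consistentP hB; apply/consistentP => u v guv.
by rewrite !inE => /andP[vA vB]; rewrite (hA _ _ guv vA) (hB _ _ guv vB).
Qed.

Lemma consistentU (A B : {set E}) :
  consistent g A -> consistent g B -> consistent g (A :|: B).
Proof.
move=> /consistentP hA /consistentP hB; apply/consistentP => u v guv.
rewrite !inE => /orP[vA | vB]; first by rewrite (hA _ _ guv vA).
by rewrite (hB _ _ guv vB) orbT.
Qed.

Lemma consistent_connect (C : {set E}) x y :
  consistent g C -> connect g x y -> y \in C -> x \in C.
Proof.
move=> /consistentP hC /connectP[p pth ->]; elim: p x pth => [|z p IH] x //=.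
by case/andP=> gxz pz yC; apply: (hC _ _ gxz); apply: IH.
Qed.

End Cuts.

Section FamilyGraph.

Variables (E : finType) (F : {set {set E}}).

Definition family_graph : rel E :=
  fun u v => [forall C in F, (v \in C) ==> (u \in C)].

Hypotheses (F0 : set0 \in F) (FT : setT \in F)
  (FI : forall A B, A \in F -> B \in F -> A :&: B \in F)
  (FU : forall A B, A \in F -> B \in F -> A :|: B \in F).

Lemma cuts_family_graph : cuts family_graph = F.
Proof.
apply/setP => C; rewrite inE; apply/idP/idP => [/consistentP cC | CF]; last first.
  by apply/consistentP => u v /forallP/(_ C); rewrite CF /= => /implyP.
pose least v := \bigcap_(C' in F | v \in C') C'.
have leastF v : least v \in F.
  by apply: (big_ind (fun X => X \in F)) => // C' /andP[].
suff -> : C = \bigcup_(v in C) least v by apply: (big_ind (fun X => X \in F)).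
apply/setP => x; apply/idP/bigcupP => [xC | [v vC /bigcapP x_least]].
  by exists x => //; apply/bigcapP => C' /andP[].
apply: (cC x v) => //; apply/forallP => C'; apply/implyP => C'F.
by apply/implyP => vC'; apply: x_least; rewrite C'F.
Qed.

End FamilyGraph.

Section Computation.

Variables (E : finType) (g : rel E) (n : nat) (proc : E -> 'I_n)
  (po msg : rel E) (bot top : 'I_n -> E).
Hypothesis computation : is_computation g proc po msg bot top.

Lemma connect_po e f : po e f -> connect g e f.
Proof.
case: computation => _ [_ [_ [_ [_ [_ [_ [hb _]]]]]]].
by move=> pef; apply: hb; apply: t_step; left.
Qed.

Lemma connect_bot_proc e : connect g (bot (proc e)) e.
Proof.
case: computation => _ [_ [_ [_ [_ [hbot _]]]]].
have [<- | ne] := eqVneq e (bot (proc e)); first exact: connect0.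
by apply: connect_po; apply: hbot; last exact/eqP.
Qed.

Lemma connect_proc_top e : connect g e (top (proc e)).
Proof.
case: computation => _ [_ [_ [_ [_ [_ [htop _]]]]]].
have [<- | ne] := eqVneq e (top (proc e)); first exact: connect0.
by apply: connect_po; apply: htop; last exact/eqP.
Qed.

Lemma cut_bot (C : {set E}) j :
  consistent g C -> C != set0 -> bot j \in C.
Proof.
case: computation => _ [_ [_ [_ [_ [_ [_ [_ [hbb _]]]]]]]].
move=> cC /set0Pn[e eC].
apply: (consistent_connect cC (hbb j (proc e))).
exact: (consistent_connect cC (connect_bot_proc e)).
Qed.

Lemma cut_top (C : {set E}) j :
  consistent g C -> C != setT -> top j \notin C.
Proof.
case: computation => _ [_ [_ [_ [_ [_ [_ [_ [_ htt]]]]]]]].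
move=> cC; apply: contra => tjC; apply/eqP/setP => x; rewrite inE.
apply: (consistent_connect cC (connect_proc_top x)).
exact: (consistent_connect cC (htt (proc x) j)).
Qed.

Lemma lean_regular (b : {set E} -> bool) (S : rel E) :
  (forall C, satisfies g b C -> consistent S C) ->
  lean g b S -> regular g b.
Proof.
move=> slice_sat leanS C1 C2 s1 s2.
move: (s1) (s2) => /and4P[c1 nz1 nT1 _] /and4P[c2 nz2 nT2 _].
have [e _] := set0Pn _ nz1; set j := proc e.
have top1 := cut_top j c1 nT1; have top2 := cut_top j c2 nT2.
split; apply: leanS.
- exact: consistentI (slice_sat _ s1) (slice_sat _ s2).
- apply/set0Pn; exists (bot j).
  by rewrite inE (cut_bot j c1 nz1) (cut_bot j c2 nz2).
- apply: contra top1 => /eqP I_T.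
  by have := in_setT (top j); rewrite -I_T inE => /andP[].
- exact: consistentU (slice_sat _ s1) (slice_sat _ s2).
- by apply: contraNneq nz1 => U0; rewrite -subset0 -U0 subsetUl.
- apply/negP => /eqP U_T.
  by have := in_setT (top j); rewrite -U_T inE (negbTE top1) (negbTE top2).
Qed.

End Computation.

Lemma slice_cutsE (E : finType) (g : rel E) (b : {set E} -> bool) (S : rel E)
    (F : {set {set E}}) :
  is_slice g b S ->
  set0 \in F -> setT \in F ->
  (forall A B, A \in F -> B \in F -> A :&: B \in F) ->
  (forall A B, A \in F -> B \in F -> A :|: B \in F) ->
  (forall C, satisfies g b C -> C \in F) -> F \subset cuts S ->
  cuts S = F.
Proof.
move=> [_ slice_min] F0 FT FI FU satF F_cutsS.
have cutsF := cuts_family_graph F0 FT FI FU.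
apply/esym/eqP; rewrite eqEcard F_cutsS -cutsF /=.
by apply: slice_min => C /satF; rewrite -{1}cutsF inE.
Qed.

Lemma regular_lean (E : finType) (g : rel E) (b : {set E} -> bool) (S : rel E) :
  is_slice g b S -> regular g b -> lean g b S.
Proof.
move=> slice reg.
pose F := [set C | [|| satisfies g b C, C == set0 | C == setT]].
have F0 : set0 \in F by rewrite inE eqxx orbT.
have FT : setT \in F by rewrite inE eqxx !orbT.
have FI A B : A \in F -> B \in F -> A :&: B \in F.
  rewrite !inE => /or3P[sA|/eqP->|/eqP->] /or3P[sB|/eqP->|/eqP->];
    rewrite ?set0I ?setI0 ?setTI ?setIT ?eqxx ?orbT ?sA ?sB //.
  by rewrite (reg _ _ sA sB).1.
have FU A B : A \in F -> B \in F -> A :|: B \in F.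
  rewrite !inE => /or3P[sA|/eqP->|/eqP->] /or3P[sB|/eqP->|/eqP->];
    rewrite ?set0U ?setU0 ?setTU ?setUT ?eqxx ?orbT ?sA ?sB //.
  by rewrite (reg _ _ sA sB).2.
have satF C : satisfies g b C -> C \in F by rewrite inE => ->.
have F_cutsS : F \subset cuts S.
  apply/subsetP => C; rewrite !inE => /or3P[/slice.1 // | /eqP-> | /eqP->].
    exact: consistent0.
  exact: consistentT.
have cutsS := slice_cutsE slice F0 FT FI FU satF F_cutsS.
move=> C cC nz nT.
have : C \in F by rewrite -cutsS inE.
by rewrite inE (negbTE nz) (negbTE nT) !orbF.
Qed.

Theorem theorem5 (E : finType) (g : rel E) (n : nat) (proc : E -> 'I_n)
    (po msg : rel E) (bot top : 'I_n -> E) (b : {set E} -> bool) (S : rel E) :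
  is_computation g proc po msg bot top ->
  is_slice g b S ->
  (lean g b S <-> regular g b).
Proof.
move=> computation slice; split; first exact: (lean_regular computation slice.1).
exact: regular_lean.
Qed.
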